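(* Let $A$ be a finite alphabet and let $L$ be a circular language over $A$ (a set of circular words). The following conditions are equivalent: (1) There exists a $(1,3)$-complete circular splicing system $S=(A,I,R)$, with $I$ a finite set of nonempty circular words, such that $L=L(S)$. (2) There exists a flat splicing system $\mathcal{S}=(A,Y,R')$, where $Y\subseteq A^+$ is a finite language closed under the conjugacy relation and $R'=\{\langle a\mid 1 - 1\mid b\rangle : a,b\in A\}$, such that $L(\mathcal{S})=Lin(L)$. (3) There exists a finite language $Y\subseteq A^+$, closed under the conjugacy relation, such that $Lin(L)=Y^{\leftarrow_*}\setminus\{1\}$.
   Context: $1$ denotes the empty word, $A^+=A^*\setminus\{1\}$. Conjugacy: $xy\sim yx$ for $x,y\in A^*$; a circular word $\sim w$ is the conjugacy class of $w$; for a set $L$ of circular words, $Lin(L)=\{w\in A^*:\ \sim w\in L\}$ (full linearization); for $Y\subseteq A^*$, $\sim Y=\{\sim w: w\in Y\}$. A $(1,3)$-complete system $S=(A,I,R)$: $I$ is a finite set of circular words and the set of rules is $R=\{a\#1\$b\#1 : a,b\in A\}$ (all pairs of letters). Circular splicing with rule $a\#1\$b\#1$: from circular words $\sim xa$ and $\sim yb$ (for some words $x,y$) it produces $\sim xayb$. $L(S)$ is the smallest set of circular words containing $I$ and closed under applying rules of $R$ to any two (not necessarily distinct) of its elements. Flat splicing system $\mathcal{S}=(A,Y,R')$: $Y\subseteq A^*$, $R'$ a finite set of rules $\langle\alpha\mid\beta-\gamma\mid\delta\rangle$ with $\alpha,\beta,\gamma,\delta\in A^*$; applying such a rule to $u=x\alpha\beta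 y$ and $v=\gamma z\delta$ yields $x\alpha\gamma z\delta\beta y$. In particular $\langle a\mid 1-1\mid b\rangle$ applied to $u=xay$ and $v=zb$ yields $xazby$. $L(\mathcal{S})$ is the smallest language containing $Y$ and closed under applying rules of $R'$. Iterated insertion: for $Z,Y\subseteq A^*$, $Z\leftarrow Y=\{z_1yz_2: z_1z_2\in Z, y\in Y\}$; $Y^{\leftarrow_0}=\{1\}$, $Y^{\leftarrow_{i+1}}=Y^{\leftarrow_i}\leftarrow Y$, $Y^{\leftarrow_*}=\bigcup_{i\ge0}Y^{\leftarrow_i}$. *)

From HB Require Import structures.
From mathcomp Require Import all_boot.
Set Implicit Arguments. Unset Strict Implicit. Unset Printing Implicit Defensive.

Section Words.
Variable A : finType.
Local Notation word := (seq A).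

(* Note [rot i x] is by definition [drop i x ++ take i x],
   and every factorisation x = u v is of this form with i = size u <= size x. *)
Definition conjb (x y : word) : bool :=
  [exists i : 'I_(size x).+1, y == drop i x ++ take i x].

Lemma conjb_refl x : conjb x x.
Proof. by apply/existsP; exists ord0; rewrite drop0 take0 cats0. Qed.

Lemma conjbP x y : reflect (exists2 i, i <= size x & y = rot i x) (conjb x y).
Proof.
apply: (iffP existsP) => [[i /eqP ->]|[i Hi ->]].
  by exists i; [rewrite -ltnS ltn_ord | ].
have Hi' : i < (size x).+1 by []. by exists (Ordinal Hi').
Qed.

Lemma conjb_sym x y : conjb x y -> conjb y x.
Proof.
move/conjbP=> [i Hi ->]; apply/conjbP; exists (size x - i).
  by rewrite size_rot leq_subr.
by rewrite -{1}(rotK i x) /rotr size_rot.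
Qed.

Lemma conjb_trans x y z : conjb x y -> conjb y z -> conjb x z.
Proof.
move=> /conjbP[i Hi ->] /conjbP[j]; rewrite size_rot => Hj ->.
apply/conjbP; rewrite rot_add_mod //.
eexists; last reflexivity.
by case: (leqP (j + i) (size x)) => // _; rewrite leq_subLR leq_add.

Qed.

Definition crep (w : word) : word := choose (conjb w) w.

Lemma conjb_crep w : conjb w (crep w).
Proof. exact: chooseP (conjb_refl w). Qed.

Lemma crep_conj w w' : conjb w w' -> crep w' = crep w.
Proof.
move=> H; rewrite /crep.
have E : conjb w' =1 conjb w.
  move=> v; apply/idP/idP => Hv.
    exact: conjb_trans H Hv.
  exact: conjb_trans (conjb_sym H) Hv.
rewrite (eq_choose E); apply: choose_id => //; exact: conjb_refl.
Qed.

Lemma crep_idem w : crep (crep w) == crep w.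
Proof. by rewrite (crep_conj (conjb_crep w)). Qed.

(* Circular words: conjugacy classes, represented by their canonical element *)
Definition circ : Type := {w : word | crep w == w}.
HB.instance Definition _ := Equality.copy circ {w : word | crep w == w}.

Definition cw (w : word) : circ := exist _ (crep w) (crep_idem w).

Definition Lin (L : circ -> Prop) : word -> Prop := fun w => L (cw w).

(* L(S) for the (1,3)-complete circular splicing system S = (A, I, R),
   R = { a#1$b#1 : a, b in A }:  from ~xa and ~yb one gets ~xayb. *)
Inductive circ13 (I : seq circ) : circ -> Prop :=
| circ13_init c : c \in I -> circ13 I c
| circ13_step (x y : word) (a b : A) :
    circ13 I (cw (rcons x a)) -> circ13 I (cw (rcons y b)) ->
    circ13 I (cw (x ++ a :: y ++ [:: b])).

Definition frule : Type := (word * word * word * word)%type.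
Definition f_alpha (r : frule) : word := r.1.1.1.
Definition f_beta (r : frule) : word := r.1.1.2.
Definition f_gamma (r : frule) : word := r.1.2.
Definition f_delta (r : frule) : word := r.2.

Inductive flatL (Y : word -> Prop) (R : seq frule) : word -> Prop :=
| flatL_init w : Y w -> flatL Y R w
| flatL_step (r : frule) (x y z : word) :
    r \in R ->
    flatL Y R (x ++ f_alpha r ++ f_beta r ++ y) ->
    flatL Y R (f_gamma r ++ z ++ f_delta r) ->
    flatL Y R (x ++ f_alpha r ++ f_gamma r ++ z ++ f_delta r ++ f_beta r ++ y).

Definition Rflat : seq frule :=
  [seq ([:: p.1], [::], [::], [:: p.2]) : frule | p <- enum {: A * A}].

Definition insertion (Z Y : word -> Prop) : word -> Prop :=
  fun w => exists z1 z2 y, Z (z1 ++ z2) /\ Y y /\ w = z1 ++ y ++ z2.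

Fixpoint iter_ins (Y : word -> Prop) (n : nat) : word -> Prop :=
  match n with
  | 0 => fun w => w = [::]
  | n'.+1 => insertion (iter_ins Y n') Y
  end.

Definition ins_star (Y : word -> Prop) : word -> Prop :=
  fun w => exists n, iter_ins Y n w.

Definition conj_closed (Y : seq word) : Prop :=
  forall x y, x \in Y -> conjb x y -> y \in Y.

End Words.

From HB Require Import structures.
From mathcomp Require Import all_boot.

(* The key fact is that when Y consists of nonempty words and is closed under
   conjugacy, so is the iterated insertion closure Y^{<-*}: rotating a word
   of Y^{<-*} by one letter either rotates a word of Y (which stays in Y) or
   moves a letter of the word the last insertion was made into.  Given this,
   - the flat rule <a | 1 - 1 | b> turns x a y and z b into x a z b y, i.e.
     inserts a nonempty word of the language, so L(S') = Y^{<-*} \ {1};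
   - the circular rule a#1$b#1 turns ~xa and ~yb into ~xayb, which is, up to
     conjugacy, an insertion of y b into x a; conversely any insertion
     z1 y z2 is conjugate to (z2 z1) y, so Lin(L(S)) = Y^{<-*} \ {1} for Y
     the conjugacy closure of I, and I = ~Y. *)

Set Implicit Arguments. Unset Strict Implicit. Unset Printing Implicit Defensive.

Section CircularWords.
Variable A : finType.
Implicit Types u v w : seq A.

Lemma eq_cw u v : conjb u v -> cw u = cw v.
Proof. by move=> Huv; apply: val_inj; rewrite /= (crep_conj Huv). Qed.

Lemma cw_conjb u v : cw u = cw v -> conjb u v.
Proof.
move=> /(congr1 val) /= Erep.
by apply: conjb_trans (conjb_crep u) _; rewrite Erep; apply/conjb_sym/conjb_crep.
Qed.

Lemma cw_val (c : circ A) : cw (val c) = c.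
Proof. by apply: val_inj; rewrite /= (eqP (valP c)). Qed.

Lemma size_conjb u v : conjb u v -> size v = size u.
Proof. by move/conjbP=> [i _ ->]; rewrite size_rot. Qed.

Lemma conjb_catC u v : conjb (u ++ v) (v ++ u).
Proof.
by apply/conjbP; exists (size u); rewrite ?size_cat ?leq_addr ?rot_size_cat.
Qed.

Definition conj_closure (s : seq (seq A)) : seq (seq A) :=
  flatten [seq [seq rot i u | i <- iota 0 (size u).+1] | u <- s].

Lemma conj_closureP s w :
  w \in conj_closure s <-> exists2 u, u \in s & conjb u w.
Proof.
split=> [/flattenP[_ /mapP[u Hu ->] /mapP[i Hi ->]]|[u Hu /conjbP[i Hi ->]]].
  by exists u => //; apply/conjbP; exists i; move: Hi; rewrite mem_iota add0n ltnS.
apply/flattenP; exists [seq rot i u | i <- iota 0 (size u).+1].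
  by apply/mapP; exists u.
by apply/mapP; exists i; rewrite // mem_iota add0n ltnS.
Qed.

Lemma conj_closed_closure s : conj_closed (conj_closure s).
Proof.
move=> x y /conj_closureP[u Hu Hux] Hxy.
by apply/conj_closureP; exists u => //; apply: conjb_trans Hxy.
Qed.

Lemma conj_closure_neq0 s :
  (forall u, u \in s -> u != [::]) ->
  forall w, w \in conj_closure s -> w != [::].
Proof.
move=> s_neq0 w /conj_closureP[u Hu Huw].
by rewrite -size_eq0 (size_conjb Huw) size_eq0 s_neq0.
Qed.

End CircularWords.

Section Insertion.
Variable A : finType.
Variable Y : seq A -> Prop.
Implicit Types u v w : seq A.

Lemma ins_star_nil : ins_star Y [::].
Proof. by exists 0. Qed.

Lemma ins_star_gen y : Y y -> ins_star Y y.
Proof. by move=> Hy; exists 1, [::], [::], y; rewrite /= cats0. Qed.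

Lemma ins_star_insert u1 u2 y :
  ins_star Y (u1 ++ u2) -> Y y -> ins_star Y (u1 ++ y ++ u2).
Proof. by move=> [n Hn] Hy; exists n.+1, u1, u2, y. Qed.

Lemma ins_star_ins u1 u2 v :
  ins_star Y (u1 ++ u2) -> ins_star Y v -> ins_star Y (u1 ++ v ++ u2).
Proof.
move=> Hu [n]; elim: n v u1 u2 Hu => [|n IHn] v u1 u2 Hu /=; first by move->.
move=> [z1 [z2 [y [Hz [Hy ->]]]]].
have := IHn _ _ _ Hu Hz; rewrite -!catA catA => /ins_star_insert/(_ Hy).
by rewrite -!catA.
Qed.

Lemma ins_star_cat u v : ins_star Y u -> ins_star Y v -> ins_star Y (u ++ v).
Proof.
move=> Hu Hv; have := ins_star_ins (u1 := u) (u2 := [::]) (v := v).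
by rewrite !cats0; apply.
Qed.

Hypothesis Y_neq0 : forall y, Y y -> y != [::].
Hypothesis Y_conj : forall x y, Y x -> conjb x y -> Y y.

Lemma ins_star_rot1 w : ins_star Y w -> ins_star Y (rot 1 w).
Proof.
move=> [n]; elim: n w => [|n IHn] w /=; first by move->; apply: ins_star_nil.
move=> [[|c z1] [z2 [y [Hz [Hy ->]]]]] /=.
  case: y Hy => [|c y] Hy; first by have := Y_neq0 Hy.
  have Hy' : Y (y ++ [:: c]).
    by apply: Y_conj Hy _; rewrite -cat1s; apply: conjb_catC.
  rewrite cat_cons rot1_cons -cats1 -catA.
  by apply: (ins_star_ins (u1 := y)); [apply: ins_star_gen | exists n].
have := IHn _ Hz; rewrite cat_cons !rot1_cons -!cats1 -!catA.
by move/ins_star_insert; apply.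
Qed.

Lemma ins_star_conj w w' : conjb w w' -> ins_star Y w -> ins_star Y w'.
Proof.
move=> /conjbP[i Hi ->] Hw; elim: i Hi => [|i IHi] Hi; first by rewrite rot0.
by rewrite rotS //; apply/ins_star_rot1/IHi/ltnW.
Qed.

End Insertion.

Section FlatSplicing.
Variable A : finType.
Variable Y : seq A -> Prop.
Hypothesis Y_neq0 : forall y, Y y -> y != [::].
Implicit Types w x y z : seq A.

Local Notation flatY := (flatL Y (Rflat A)).

Lemma Rflat_rule (a b : A) : ([:: a], [::], [::], [:: b]) \in Rflat A.
Proof. by apply/mapP; exists (a, b); rewrite ?mem_enum. Qed.

Lemma flatL_splice x a z b y :
  flatY (x ++ a :: y) -> flatY (rcons z b) -> flatY (x ++ a :: z ++ b :: y).
Proof.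
move=> Hxay Hzb.
by apply: (flatL_step (x := x) (y := y) (z := z) (Rflat_rule a b)); rewrite // /f_delta /= cats1.
Qed.

Lemma flatL_ins_star w : flatY w -> ins_star Y w /\ w <> [::].
Proof.
elim=> [u Hu|r x y z /mapP[[a b] _ ->] _ [Hxay _] _ [Hzb _]] /=.
  by split; [apply: ins_star_gen | move=> u0; have := Y_neq0 Hu; rewrite u0].
split; last by move/(congr1 size); rewrite size_cat /= addnS.
move: Hxay Hzb; rewrite /f_alpha /f_beta /f_gamma /f_delta /= -cat1s catA.
by move=> /ins_star_ins/[apply]; rewrite -!catA.
Qed.

Lemma ins_star_flatL w : ins_star Y w -> w <> [::] -> flatY w.
Proof.
move=> [n]; elim: n w => [|n IHn] w /=; first by move->.
move=> [z1 [z2 [y [Hz [Hy ->]]]]] Hne.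
case: (lastP y) Hy => [|y0 b] Hy; first by have := Y_neq0 Hy.
case: (lastP z1) Hz => [|x a] Hz /=.
  case: (lastP z2) Hz => [|z c] Hz; first by rewrite cats0; apply: flatL_init.
  have := flatL_splice (x := y0) (a := b) (z := z) (b := c) (y := [::]).
  rewrite -!cats1 -!catA; apply; first by apply: flatL_init; rewrite cats1.
  rewrite cats1; apply: IHn Hz _.
  by move/(congr1 size); rewrite size_rcons.
rewrite !cat_rcons; apply: flatL_splice; last exact: flatL_init.
apply: IHn; first by rewrite -cat_rcons.
by move/(congr1 size); rewrite size_cat /= addnS.
Qed.

Lemma flatLE w : flatY w <-> ins_star Y w /\ w <> [::].
Proof.
by split=> [|[]]; [apply: flatL_ins_star | apply: ins_star_flatL].
Qed.

End FlatSplicing.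

Section CircularSplicing.
Variable A : finType.
Variable Y : seq A -> Prop.
Hypothesis Y_neq0 : forall y, Y y -> y != [::].
Hypothesis Y_conj : forall x y, Y x -> conjb x y -> Y y.
Variable I : seq (circ A).
Hypothesis memI : forall c, c \in I <-> exists2 y, Y y & c = cw y.
Implicit Types w : seq A.

Lemma circ13_ins_star c w : circ13 I c -> cw w = c -> ins_star Y w /\ w <> [::].
Proof.
move=> Hc; elim: Hc w => [_ /memI[y Hy ->]|x y a b _ IHxa _ IHyb] w Ew.
  have Yw := Y_conj Hy (cw_conjb (esym Ew)).
  by split; [apply: ins_star_gen | move=> w0; have := Y_neq0 Yw; rewrite w0].
have Hconj := cw_conjb (esym Ew).
have [[Hxa _] [Hyb _]] := (IHxa _ erefl, IHyb _ erefl).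
split; last by move=> w0; have := size_conjb Hconj; rewrite w0 size_cat addnS.
apply: (ins_star_conj Y_neq0 Y_conj Hconj).
by have := ins_star_cat Hxa Hyb; rewrite cat_rcons cats1.
Qed.

Lemma ins_star_circ13 w : ins_star Y w -> w <> [::] -> circ13 I (cw w).
Proof.
move=> [n]; elim: n w => [|n IHn] w /=; first by move->.
move=> [z1 [z2 [y [Hz [Hy ->]]]]] Hne.
have Iy : circ13 I (cw y) by apply/circ13_init/memI; exists y.
have [z12_0|z12_neq0] := eqVneq (z1 ++ z2) [::].
  by move: z12_0; case: z1 {Hz Hne} => [|? ?] //; case: z2 => [|? ?] // _; rewrite cats0.
have Iz : circ13 I (cw (z2 ++ z1)).
  by rewrite -(eq_cw (conjb_catC z1 z2)); apply: IHn Hz _; apply/eqP.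
rewrite catA (eq_cw (conjb_catC (z1 ++ y) z2)) catA.
case: (lastP (z2 ++ z1)) Iz => [|x a] Iz.
  by move: z12_neq0; rewrite -size_eq0 -(size_conjb (conjb_catC z1 z2)).
case: (lastP y) Iy Hy => [|y0 b] Iy Hy; first by have := Y_neq0 Hy.
by rewrite cat_rcons -cats1; apply: circ13_step.
Qed.

Lemma circ13_cwE w : circ13 I (cw w) <-> ins_star Y w /\ w <> [::].
Proof.
by split=> [/circ13_ins_star|[]]; [apply | apply: ins_star_circ13].
Qed.

End CircularSplicing.

Theorem theorem11p6 (A : finType) (L : circ A -> Prop) :
  let cond1 :=
    exists I : seq (circ A),
      (forall c, c \in I -> val c != [::]) /\
      (forall c, L c <-> circ13 I c) in
  let cond2 :=
    exists Y : seq (seq A),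
      (forall w, w \in Y -> w != [::]) /\ conj_closed Y /\
      (forall w, flatL (fun u => u \in Y) (Rflat A) w <-> Lin L w) in
  let cond3 :=
    exists Y : seq (seq A),
      (forall w, w \in Y -> w != [::]) /\ conj_closed Y /\
      (forall w, Lin L w <-> (ins_star (fun u => u \in Y) w /\ w <> [::])) in
  (cond1 <-> cond2) /\ (cond2 <-> cond3).
Proof.
move=> cond1 cond2 cond3.
have cond23 : cond2 <-> cond3.
  split=> -[Y [Y_neq0 [Y_conj HY]]]; exists Y; do 2!split=> //;
    by move=> w; have := flatLE Y_neq0 w; have := HY w; tauto.
suff cond13 : cond1 <-> cond3 by tauto.
split=> [[I [I_neq0 HL]]|[Y [Y_neq0 [Y_conj HL]]]].
  pose Y := conj_closure [seq val c | c <- I].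
  have Y_neq0 : forall w, w \in Y -> w != [::].
    by apply: conj_closure_neq0 => _ /mapP[c Hc ->]; apply: I_neq0.
  have memI c : c \in I <-> exists2 y, y \in Y & c = cw y.
    split=> [Hc|[y /conj_closureP[_ /mapP[c' Hc' ->] Hy] ->]].
      by exists (val c); rewrite ?cw_val //; apply/conj_closureP; exists (val c);
        rewrite ?map_f ?conjb_refl.
    by rewrite -(eq_cw Hy) cw_val.
  exists Y; do 2!split=> //; first exact: conj_closed_closure.
  move=> w; apply: iff_trans (HL (cw w)) _.
  exact: (circ13_cwE Y_neq0 (@conj_closed_closure _ _)).
exists [seq cw y | y <- Y]; split.
  move=> _ /mapP[y Hy ->] /=.
  by rewrite -size_eq0 (size_conjb (conjb_crep y)) size_eq0 Y_neq0.
have memI c : c \in [seq cw y | y <- Y] <-> exists2 y, y \in Y & c = cw y.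
  by split=> [/mapP|[y Hy ->]]; last apply: map_f.
move=> c; rewrite -(cw_val c).
apply: iff_trans (HL (val c)) (iff_sym _); exact: circ13_cwE.
Qed.
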